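(* Let $A_h,B\in\mathcal L(\mathbb R^{N\times N}_s)$ be symmetric positive tensors and $\gamma>0$ such that $\gamma A_h-B$ is positive. Let $S(t)=-Be^{-\gamma t}$, $t\geq0$, and $LS(z)=\int_0^\infty e^{-zt}S(t)dt$ its Laplace transform. Then there exists $c>0$ such that for all $z\in\mathbb C$ with $\mathrm{Re}(z)>0$ and all $\xi\in\mathbb C^{N\times N}_s$, $$\mathrm{Re}\big((A_h+LS(z))\xi:\overline{z\xi}\big)\geq c\Big(\mathrm{Re}(z)+\frac{|z|^2}{1+|z|^2}\Big)|\xi|^2,\qquad \mathrm{Im}\big((A_h+LS(z))\xi:\overline{z\xi}\big)\,\mathrm{Im}(z)\leq-c|\mathrm{Im}(z)|^2|\xi|^2.$$
   Context: $\xi:\eta=\sum_{ij}\xi_{ij}\eta_{ij}$ (bilinear, no conjugation); $\mathbb C^{N\times N}_s$ denotes complex symmetric matrices and tensors in $\mathcal L(\mathbb R^{N\times N}_s)$ are extended complex-linearly. A tensor $M$ is positive if $M\xi:\xi>0$ for $\xi\neq0$ real symmetric. *)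

From HB Require Import structures.
From mathcomp Require Import all_boot all_order all_algebra.
From mathcomp Require Import all_classical all_reals all_analysis.
From mathcomp Require Import complex.
Set Implicit Arguments. Unset Strict Implicit. Unset Printing Implicit Defensive.
Import Order.TTheory GRing.Theory Num.Theory.
Local Open Scope ring_scope.

Section Defs.
Variables (R : realType) (N : nat).
Local Notation C := R[i].

Definition tensor (K : Type) := 'I_N -> 'I_N -> 'I_N -> 'I_N -> K.

Definition tapply (K : pzRingType) (M : tensor K) (xi : 'M[K]_N) : 'M[K]_N :=
  \matrix_(i, j) \sum_(k < N) \sum_(l < N) M i j k l * xi k l.

(* bilinear double contraction xi : eta = \sum_{ij} xi_ij eta_ij (no conjugation) *)
Definition ddot (K : pzRingType) (xi eta : 'M[K]_N) : K :=
  \sum_(i < N) \sum_(j < N) xi i j * eta i j.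

Definition symmx (K : Type) (xi : 'M[K]_N) : Prop := xi^T = xi.

Definition sym_tensor (M : tensor R) : Prop :=
  forall xi eta : 'M[R]_N, symmx xi -> symmx eta ->
    ddot (tapply M xi) eta = ddot xi (tapply M eta).

Definition pos_tensor (M : tensor R) : Prop :=
  forall xi : 'M[R]_N, symmx xi -> xi != 0 -> 0 < ddot (tapply M xi) xi.

Definition tensorC (M : tensor R) : tensor C :=
  fun i j k l => (M i j k l)%:C%C.

Definition mxconjC (xi : 'M[C]_N) : 'M[C]_N :=
  \matrix_(i, j) ((complex.Re (xi i j)) -i* (complex.Im (xi i j)))%C.

Definition fnorm2 (xi : 'M[C]_N) : R :=
  \sum_(i < N) \sum_(j < N) (complex.Re (xi i j) ^+ 2 + complex.Im (xi i j) ^+ 2).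

End Defs.

(* Laplace transform of a real function f : [0,oo) -> R at z in C:
   Lf(z) = \int_0^oo e^{-zt} f(t) dt, with
   e^{-zt} = e^{-Re z t} (cos (Im z t) - i sin (Im z t)). *)
Definition laplace (R : realType) (f : R -> R) (z : R[i]) : R[i] :=
  ((Rintegral (@lebesgue_measure R) `[0%R, +oo[%classic
      (fun t => expR (- complex.Re z * t) * cos (complex.Im z * t) * f t))
   +i*
   (- Rintegral (@lebesgue_measure R) `[0%R, +oo[%classic
      (fun t => expR (- complex.Re z * t) * sin (complex.Im z * t) * f t)))%C.

Definition laplace_tensor (R : realType) (N : nat)
  (S : R -> tensor N R) (z : R[i]) : tensor N R[i] :=
  fun i j k l => laplace (fun t => S t i j k l) z.

(* The memory term is explicit: LS(z) = -B/(z + gamma), so the tensor is Ah - B/(z + gamma).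
   For a real symmetric tensor M and a complex symmetric xi = u + i v, the cross terms of
   (M xi) : conj xi cancel and it equals M[u] + M[v] := M u : u + M v : v, a real number.
   Hence Q = conj z (a - b/(z + gamma)) with a = Ah[u] + Ah[v] and b = B[u] + B[v], whose
   real and imaginary parts are explicit rational functions of x = Re z > 0 and y = Im z.
   A positive tensor is coercive on symmetric matrices (its quadratic form attains a positive
   minimum on the compact unit sphere), so b >= k2 |xi|^2 and gamma a - b >= k1 |xi|^2; the
   two bounds then follow from elementary inequalities such as
   (2 x + gamma) / |z + gamma|^2 <= 1 / gamma. *)

From HB Require Import structures.
From mathcomp Require Import all_boot all_order all_algebra.
From mathcomp Require Import all_classical all_reals all_analysis.
From mathcomp Require Import complex measurable_realfun.
From mathcomp Require Import ring lra.
Set Implicit Arguments. Unset Strict Implicit. Unset Printing Implicit Defensive.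
Import Order.TTheory GRing.Theory Num.Theory.
Import numFieldNormedType.Exports.
Local Open Scope ring_scope.
Local Open Scope classical_set_scope.

Section tensor_algebra.
Variables (K : pzRingType) (N : nat).
Implicit Types (M : tensor N K) (x y : 'M[K]_N).

Definition qform M x : K := ddot (tapply M x) x.

Lemma ddotDl x y z : ddot (x + y) z = ddot x z + ddot y z.
Proof.
rewrite /ddot -big_split; apply: eq_bigr => i _.
by rewrite -big_split; apply: eq_bigr => j _; rewrite mxE mulrDl.
Qed.

Lemma ddotZl c x y : ddot (c *: x) y = c * ddot x y.
Proof.
rewrite /ddot mulr_sumr; apply: eq_bigr => i _.
by rewrite mulr_sumr; apply: eq_bigr => j _; rewrite mxE mulrA.
Qed.

Lemma ddotBl x y z : ddot (x - y) z = ddot x z - ddot y z.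
Proof.
rewrite /ddot -sumrB; apply: eq_bigr => i _.
by rewrite -sumrB; apply: eq_bigr => j _; rewrite !mxE mulrBl.
Qed.

Lemma ddotDr x y z : ddot x (y + z) = ddot x y + ddot x z.
Proof.
rewrite /ddot -big_split; apply: eq_bigr => i _.
by rewrite -big_split; apply: eq_bigr => j _; rewrite mxE mulrDr.
Qed.

Lemma tapplyD M x y : tapply M (x + y) = tapply M x + tapply M y.
Proof.
apply/matrixP => i j; rewrite !mxE -big_split; apply: eq_bigr => k _.
by rewrite -big_split; apply: eq_bigr => l _; rewrite mxE mulrDr.
Qed.

Lemma tapply_tensorD (A B : tensor N K) x :
  tapply (fun i j k l => A i j k l + B i j k l) x = tapply A x + tapply B x.
Proof.
apply/matrixP => i j; rewrite !mxE -big_split; apply: eq_bigr => k _.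
by rewrite -big_split; apply: eq_bigr => l _; rewrite mulrDl.
Qed.

Lemma tapply_tensorB (A B : tensor N K) x :
  tapply (fun i j k l => A i j k l - B i j k l) x = tapply A x - tapply B x.
Proof.
apply/matrixP => i j; rewrite !mxE -sumrB; apply: eq_bigr => k _.
by rewrite -sumrB; apply: eq_bigr => l _; rewrite mulrBl.
Qed.

Lemma tapply_tensorZ c M x :
  tapply (fun i j k l => c * M i j k l) x = c *: tapply M x.
Proof.
apply/matrixP => i j; rewrite !mxE mulr_sumr; apply: eq_bigr => k _.
by rewrite mulr_sumr; apply: eq_bigr => l _; rewrite mulrA.
Qed.

Lemma ddot_map (L : pzRingType) (f : {rmorphism K -> L}) x y :
  ddot (map_mx f x) (map_mx f y) = f (ddot x y).
Proof.
rewrite /ddot rmorph_sum; apply: eq_bigr => i _.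
by rewrite rmorph_sum; apply: eq_bigr => j _; rewrite !mxE rmorphM.
Qed.

Lemma tapply_map (L : pzRingType) (f : {rmorphism K -> L}) M x :
  tapply (fun i j k l => f (M i j k l)) (map_mx f x) = map_mx f (tapply M x).
Proof.
apply/matrixP => i j; rewrite !mxE rmorph_sum; apply: eq_bigr => k _.
by rewrite rmorph_sum; apply: eq_bigr => l _; rewrite mxE rmorphM.
Qed.
End tensor_algebra.

Section commutative_tensor_algebra.
Variables (K : comPzRingType) (N : nat).
Implicit Types (M : tensor N K) (x y : 'M[K]_N).

Lemma ddotC x y : ddot x y = ddot y x.
Proof. by apply: eq_bigr => i _; apply: eq_bigr => j _; rewrite mulrC. Qed.

Lemma ddotZr c x y : ddot x (c *: y) = c * ddot x y.
Proof. by rewrite ddotC ddotZl ddotC. Qed.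

Lemma tapplyZ M c x : tapply M (c *: x) = c *: tapply M x.
Proof.
apply/matrixP => i j; rewrite !mxE mulr_sumr; apply: eq_bigr => k _.
by rewrite mulr_sumr; apply: eq_bigr => l _; rewrite mxE mulrCA.
Qed.
End commutative_tensor_algebra.

Lemma continuous_sum (R : realType) (T : topologicalType) (I : Type) (r : seq I)
    (F : I -> T -> R) :
  (forall i, continuous (F i)) -> continuous (fun x => \sum_(i <- r) F i x).
Proof.
move=> cF; rewrite -fct_sumE; apply: (big_ind (fun f : T -> R => continuous f)) => //.
  exact: cst_continuous.
by move=> f g cf cg x; apply: cvgD; [exact: cf | exact: cg].
Qed.

Section homogeneous_coercivity.
Variables (R : realType) (n : nat) (P : set 'rV[R]_n) (q : 'rV[R]_n -> R).
Hypotheses (closedP : closed P) (PZ : forall a v, P v -> P (a *: v)).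
Hypotheses (cq : continuous q) (qZ : forall a v, q (a *: v) = a ^+ 2 * q v).
Hypothesis q_gt0 : forall v, P v -> v != 0 -> 0 < q v.

Let sphere := P `&` [set v | `|v| = 1].

Let sphere_normalize v : P v -> v != 0 ->
  sphere (`|v|^-1 *: v) /\ q v = `|v| ^+ 2 * q (`|v|^-1 *: v).
Proof.
move=> Pv v0; have nv0 : `|v| != 0 by rewrite normr_eq0.
split; first split; first exact: PZ.
  by rewrite /= normrZ normrV ?unitfE // normr_id mulVf.
by rewrite qZ mulrA exprVn mulfV ?mul1r // expf_neq0.
Qed.

Lemma homogeneous_coercive :
  exists2 k, 0 < k & forall v, P v -> k * `|v| ^+ 2 <= q v.
Proof.
have q0 : q 0 = 0 by rewrite -(scale0r 0) qZ expr0n mul0r.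
have [[c Sc]|S0] := pselect (sphere !=set0); last first.
  exists 1 => // v Pv; have [->|v0] := eqVneq v 0; first by rewrite q0 normr0 expr0n mulr0.
  by case: S0; exists (`|v|^-1 *: v); case: (sphere_normalize Pv v0).
have cS : compact sphere.
  apply: bounded_closed_compact.
    by exists 1; split => // M M1 v [_ /= ->]; exact: ltW.
  apply: closedI => //; apply: (@preimage_closed _ _ (fun v : 'rV[R]_n => `|v|) [set 1]).
    by move=> x _; exact: norm_continuous.
  exact: closed_eq.
have [m /set_mem [Pm m1] mmin] :=
  compact_EVT_min (ex_intro _ c Sc) cS (continuous_subspaceT cq).
have m0 : m != 0 by rewrite -normr_eq0 m1 oner_neq0.
exists (q m); first exact: q_gt0.
move=> v Pv; have [->|v0] := eqVneq v 0; first by rewrite q0 normr0 expr0n mulr0.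
have [Sv ->] := sphere_normalize Pv v0.
by rewrite mulrC ler_wpM2l ?sqr_ge0 // mmin // inE.
Qed.
End homogeneous_coercivity.

Section symmetric_coercivity.
Variables (R : realType) (N : nat).

Let vec_mx_continuous (i j : 'I_N) :
  continuous (fun v : 'rV[R]_(N * N) => vec_mx v i j).
Proof.
have -> : (fun v : 'rV[R]_(N * N) => vec_mx v i j) = fun v => v ord0 (mxvec_index i j).
  by apply/funext => v; rewrite mxE.
exact: coord_continuous.
Qed.

Let closed_symmx : closed [set v : 'rV[R]_(N * N) | symmx (vec_mx v)].
Proof.
have -> : [set v : 'rV[R]_(N * N) | symmx (vec_mx v)] =
    \bigcap_(ij in [set: 'I_N * 'I_N])
      ((fun v => vec_mx v ij.2 ij.1 - vec_mx v ij.1 ij.2) @^-1` [set 0]).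
  apply/seteqP; split => v /=.
    by move=> /matrixP sv [i j] _ /=; rewrite -[X in _ - X](sv i j) [X in _ - X]mxE subrr.
  move=> sv; apply/matrixP => i j; apply/eqP.
  by rewrite mxE -subr_eq0; exact/eqP/(sv (i, j)).
apply: closed_bigI => -[i j] _; apply: (@preimage_closed _ _ _ [set 0]); last exact: closed_eq.
by move=> v _; apply: continuousB; apply: vec_mx_continuous.
Qed.

Let continuous_qform (M : tensor N R) :
  continuous (fun v : 'rV[R]_(N * N) => qform M (vec_mx v)).
Proof.
apply: continuous_sum => i; apply: continuous_sum => j.
have cMv : continuous (fun v : 'rV[R]_(N * N) => tapply M (vec_mx v) i j).
  have -> : (fun v : 'rV[R]_(N * N) => tapply M (vec_mx v) i j) =
      fun v => \sum_k \sum_l M i j k l * vec_mx v k l by apply/funext => v; rewrite mxE.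
  apply: continuous_sum => k; apply: continuous_sum => l.
  by move=> v; apply: continuousM; [exact: cst_continuous | exact: vec_mx_continuous].
by move=> v; apply: continuousM; [exact: cMv | exact: vec_mx_continuous].
Qed.

Let ddot_vec_mx_le (v : 'rV[R]_(N * N)) :
  ddot (vec_mx v) (vec_mx v) <= (N * N)%:R * `|v| ^+ 2.
Proof.
have entry_le (i j : 'I_N) : vec_mx v i j * vec_mx v i j <= `|v| ^+ 2.
  rewrite -expr2 -real_normK ?num_real // lerXn2r ?nnegrE ?normr_ge0 //.
  rewrite mxE -[`|v|]/(mx_norm v) mx_normrE.
  exact: (le_bigmax _ (fun ij => `|v ij.1 ij.2|) (ord0, mxvec_index i j)).
apply: (le_trans (ler_sum _ (fun i _ => ler_sum _ (fun j _ => entry_le i j)))).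
by rewrite (eq_bigr _ (fun i _ => sumr_const _ _)) sumr_const !card_ord mulr_natl mulrnA.
Qed.

Lemma pos_tensor_coercive (M : tensor N R) : pos_tensor M ->
  exists2 k, 0 < k & forall w, symmx w -> k * ddot w w <= qform M w.
Proof.
(* coercivity holds in 'rV_(N * N), where bounded closed sets are compact, for the sup norm *)
move=> pM.
have PZ a (v : 'rV[R]_(N * N)) : symmx (vec_mx v) -> symmx (vec_mx (a *: v)).
  by rewrite /symmx !linearZ /= => ->.
have qZ a (v : 'rV[R]_(N * N)) : qform M (vec_mx (a *: v)) = a ^+ 2 * qform M (vec_mx v).
  by rewrite /qform linearZ /= tapplyZ ddotZl ddotZr mulrA expr2.
have q_gt0 (v : 'rV[R]_(N * N)) : symmx (vec_mx v) -> v != 0 -> 0 < qform M (vec_mx v).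
  by move=> sv v0; apply: pM => //; apply: contra_neq v0 => h; rewrite -[v]vec_mxK h linear0.
have [k k0 hk] := homogeneous_coercive closed_symmx PZ (@continuous_qform M) qZ q_gt0.
have NN0 : 0 < 1 + (N * N)%:R :> R by rewrite ltr_pwDl.
exists (k / (1 + (N * N)%:R)); first exact: divr_gt0.
move=> w sw; have := hk (mxvec w); rewrite /= mxvecK => /(_ sw); apply: le_trans.
have hw : ddot w w <= (1 + (N * N)%:R) * `|mxvec w| ^+ 2.
  rewrite -[w in ddot w]mxvecK -[w in ddot _ w]mxvecK (le_trans (ddot_vec_mx_le _)) //.
  by rewrite ler_wpM2r ?sqr_ge0 // lerDr.
by rewrite mulrAC ler_pdivrMr // -mulrA ler_pM2l // mulrC.
Qed.
End symmetric_coercivity.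

Section complex_forms.
Variables (R : realType) (N : nat).
Local Notation C := R[i].
Local Open Scope complex_scope.
Implicit Types (M : tensor N R) (xi : 'M[C]_N).

Lemma symmx_map (K L : Type) (f : K -> L) (x : 'M[K]_N) :
  symmx x -> symmx (map_mx f x).
Proof. by rewrite /symmx map_trmx => ->. Qed.

Lemma mxconjCE xi : mxconjC xi = map_mx conjc xi.
Proof. by apply/matrixP => i j; rewrite !mxE; case: (xi i j). Qed.

Lemma mxconjCZ z xi : mxconjC (z *: xi) = z^* *: mxconjC xi.
Proof. by rewrite !mxconjCE; apply/matrixP => i j; rewrite !mxE rmorphM. Qed.

Lemma mx_ReIm xi :
  xi = map_mx (real_complex R) (map_mx (@complex.Re R) xi) +
       'i *: map_mx (real_complex R) (map_mx (@complex.Im R) xi).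
Proof. by apply/matrixP => i j; rewrite !mxE [LHS]complexE. Qed.

Lemma fnorm2E xi : fnorm2 xi =
  ddot (map_mx (@complex.Re R) xi) (map_mx (@complex.Re R) xi) +
  ddot (map_mx (@complex.Im R) xi) (map_mx (@complex.Im R) xi).
Proof.
rewrite /fnorm2 /ddot -big_split; apply: eq_bigr => i _.
by rewrite -big_split; apply: eq_bigr => j _; rewrite !mxE !expr2.
Qed.

Definition hform M xi : R :=
  qform M (map_mx (@complex.Re R) xi) + qform M (map_mx (@complex.Im R) xi).

Lemma fnorm2_ge0 xi : 0 <= fnorm2 xi.
Proof. by apply: sumr_ge0 => i _; apply: sumr_ge0 => j _; rewrite addr_ge0 ?sqr_ge0. Qed.

Lemma hform_tensorZB c (A B : tensor N R) xi :
  hform (fun i j k l => c * A i j k l - B i j k l) xi = c * hform A xi - hform B xi.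
Proof. by rewrite /hform /qform !tapply_tensorB !tapply_tensorZ !ddotBl !ddotZl; ring. Qed.

Lemma pos_tensor_coerciveC M : pos_tensor M ->
  exists2 k, 0 < k & forall xi, symmx xi -> k * fnorm2 xi <= hform M xi.
Proof.
move=> /pos_tensor_coercive[k k0 hk]; exists k => // xi sxi.
by rewrite fnorm2E mulrDr lerD // hk //; exact: symmx_map.
Qed.

Lemma qform_tensorC M xi : sym_tensor M -> symmx xi ->
  ddot (tapply (tensorC M) xi) (mxconjC xi) = (hform M xi)%:C.
Proof.
move=> sM sxi; set u := map_mx (@complex.Re R) xi; set v := map_mx (@complex.Im R) xi.
have Muv : ddot (tapply M v) u = ddot (tapply M u) v.
  by rewrite sM ?[ddot v _]ddotC //; exact: symmx_map.
have -> : mxconjC xi = map_mx (real_complex R) u + (- 'i) *: map_mx (real_complex R) v.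
  by apply/matrixP => i j; rewrite !mxE; case: (xi i j) => a b; simpc.
rewrite {1}[xi]mx_ReIm -/u -/v tapplyD tapplyZ /tensorC !tapply_map.
rewrite !(ddotDl, ddotDr, ddotZl, ddotZr) !ddot_map Muv /hform /qform /=.
by apply/eqP; rewrite eq_complex /=; apply/andP; split; apply/eqP; ring.
Qed.

Lemma ddot_tensorC_comb (A B : tensor N R) w z xi :
  sym_tensor A -> sym_tensor B -> symmx xi ->
  ddot (tapply (fun i j k l => tensorC A i j k l + w * tensorC B i j k l) xi)
       (mxconjC (z *: xi)) = z^* * ((hform A xi)%:C + w * (hform B xi)%:C).
Proof.
move=> sA sB sxi; rewrite tapply_tensorD tapply_tensorZ mxconjCZ ddotDl ddotZl !ddotZr.
by rewrite !qform_tensorC //; ring.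
Qed.
End complex_forms.

Section damped_oscillation.
Variable R : realType.
Local Notation mu := (@lebesgue_measure R).

Lemma is_derive_scale (f : R -> R) (c x d : R) :
  is_derive (c * x) 1 f d -> is_derive x 1 (fun t => f (c * t)) (c * d).
Proof.
move=> fd; have cd : is_derive x 1 ( *%R c) c.
  by apply: is_derive_eq; exact: mulr1.
by rewrite mulrC; exact: (is_derive1_comp fd cd).
Qed.

Definition damped (s y p q t : R) : R :=
  expR (- s * t) * (p * cos (y * t) + q * sin (y * t)).

Lemma is_derive_damped (s y p q t : R) :
  is_derive t 1 (damped s y p q) (damped s y (- s * p + y * q) (- s * q - y * p) t).
Proof.
have dE := is_derive_scale (is_derive_expR (- s * t)).
have dC := is_derive_scale (is_derive_cos (y * t)).
have dS := is_derive_scale (is_derive_sin (y * t)).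
have := is_deriveM dE (is_deriveD (is_deriveZ p dC) (is_deriveZ q dS)).
have scalerE (a b : R) : a *: b = a * b by [].
by move=> /is_derive_eq; apply; rewrite /damped /GRing.scale_fun !fctE !scalerE; ring.
Qed.

Lemma continuous_damped (s y p q : R) : continuous (damped s y p q).
Proof.
move=> t; have := is_derive_damped s y p q t => dD.
by apply: differentiable_continuous; apply/derivable1_diffP; exact: ex_derive.
Qed.

Lemma damped_exp (s c t : R) : damped s 0 c 0 t = c * expR (- s * t).
Proof. by rewrite /damped !mul0r cos0 mulr1 addr0 mulrC. Qed.

Lemma norm_damped (s y p q t : R) :
  `|damped s y p q t| <= damped s 0 (`|p| + `|q|) 0 t.
Proof.
rewrite damped_exp /damped normrM gtr0_norm ?expR_gt0 // mulrC ler_pM2r ?expR_gt0 //.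
rewrite (le_trans (ler_normD _ _)) // !normrM.
by rewrite lerD // ler_piMr // ?(cos_max, sin_max).
Qed.

Lemma damped_cvg0 (s y p q : R) : 0 < s -> damped s y p q t @[t --> +oo] --> 0.
Proof.
move=> s0; set K := `|p| + `|q|.
have dK0 : damped s 0 K 0 t @[t --> +oo] --> 0.
  under eq_fun do rewrite damped_exp.
  rewrite -(mulr0 K); apply: cvgMl_tmp.
  have -> : (fun t => expR (- s * t)) = (fun t => expR (- t)) \o ( *%R s).
    by apply/funext => t /=; rewrite mulNr.
  apply: (@cvg_comp _ _ _ _ _ _ (pinfty_nbhs R)); last exact: cvgr_expR.
  exact: gt0_cvgMry.
apply: (@squeeze_cvgr _ _ _ _ (fun t => - damped s 0 K 0 t) (damped s 0 K 0)).
- by apply: nearW => t; rewrite -ler_norml norm_damped.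
- by rewrite -[X in _ --> X]oppr0; exact: cvgN.
- exact: dK0.
Qed.

Lemma ge0_FTC2y_integrable (h H : R -> R) (a l : R) :
  (forall x, a <= x -> 0 <= h x) -> continuous h ->
  H x @[x --> +oo] --> l -> (forall x, is_derive x (1 : R) H (h x)) ->
  mu.-integrable `[a, +oo[ (EFin \o h) /\ Rintegral mu `[a, +oo[ h = l - H a.
Proof.
move=> h0 ch Hl dH.
have cH : continuous H.
  by move=> x; apply: differentiable_continuous; apply/derivable1_diffP; exact: ex_derive.
have hI : (\int[mu]_(x in `[a, +oo[) (h x)%:E = l%:E - (H a)%:E)%E.
  apply: ge0_continuous_FTC2y => //.
  - exact: continuous_subspaceT.
  - exact: cvg_at_right_filter (cH a).
  - by move=> x _; rewrite derive1E; exact: derive_val.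
split; last by rewrite /Rintegral hI.
apply/integrableP; split.
  apply/measurable_EFinP; apply: measurable_funTS.
  exact: continuous_measurable_fun.
rewrite (@eq_integral _ _ _ mu _ (EFin \o h)) ?hI ?ltry// => x.
by rewrite inE /= in_itv /= andbT => ax; rewrite ger0_norm // h0.
Qed.

Lemma dominated_FTC2y (f F g G : R -> R) (a l m : R) :
  (forall x, a <= x -> `|f x| <= g x) -> continuous f -> continuous g ->
  F x @[x --> +oo] --> l -> G x @[x --> +oo] --> m ->
  (forall x, is_derive x (1 : R) F (f x)) -> (forall x, is_derive x (1 : R) G (g x)) ->
  Rintegral mu `[a, +oo[ f = l - F a.
Proof.
(* the library FTC on [a, +oo[ needs a nonnegative integrand: split f = (f + g) - g *)
move=> fg cf cg Fl Gm dF dG.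
have g0 x : a <= x -> 0 <= g x by move=> ax; exact: le_trans (fg x ax).
have [ifg Ifg] : mu.-integrable `[a, +oo[ (EFin \o (f \+ g)) /\
    Rintegral mu `[a, +oo[ (f \+ g) = (l + m) - (F a + G a).
  apply: ge0_FTC2y_integrable.
  - by move=> x ax; have /ler_normlP[? _] := fg x ax; rewrite /=; lra.
  - by move=> x; apply: cvgD; [exact: cf | exact: cg].
  - exact: cvgD.
have [ig Ig] := ge0_FTC2y_integrable g0 cg Gm dG.
have -> : f = (f \+ g) \- g by apply/funext => x /=; rewrite addrK.
by rewrite RintegralB // Ifg Ig; lra.
Qed.

Lemma Rintegral_damped (s y p q : R) : 0 < s ->
  Rintegral mu `[0, +oo[ (damped s y p q) = (p * s + q * y) / (s ^+ 2 + y ^+ 2).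
Proof.
move=> s0; set D := s ^+ 2 + y ^+ 2.
have D0 : D != 0 by rewrite gt_eqF // /D; nra.
set K := `|p| + `|q|.
(* F' is the integrand: its coefficients solve - s A + y B = p and - s B - y A = q *)
set F := damped s y (- (p * s + q * y) / D) ((p * y - q * s) / D).
set G := damped s 0 (- (K / s)) 0.
have -> : (p * s + q * y) / D = 0 - F 0.
  by rewrite /F /damped !mulr0 expR0 cos0 sin0; field.
apply: (@dominated_FTC2y _ F (damped s 0 K 0) G _ _ 0).
- by move=> x _; exact: norm_damped.
- exact: continuous_damped.
- exact: continuous_damped.
- exact: damped_cvg0.
- exact: damped_cvg0.
- move=> x; apply: is_derive_eq (is_derive_damped _ _ _ _ x) _.
  by congr damped; rewrite /D; field.
- move=> x; apply: is_derive_eq (is_derive_damped _ _ _ _ x) _.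
  by congr damped; field; rewrite gt_eqF.
Qed.

Lemma laplace_exp (c g : R) (z : R[i]) : 0 < complex.Re z + g ->
  laplace (fun t => c * expR (- g * t)) z = (c%:C / (z + g%:C))%C.
Proof.
case: z => x y /= s0; rewrite /laplace /=.
have eE t : expR (- x * t) * expR (- g * t) = expR (- (x + g) * t).
  by rewrite -expRD; congr expR; ring.
have -> : (fun t => expR (- x * t) * cos (y * t) * (c * expR (- g * t))) =
    damped (x + g) y c 0.
  by apply/funext => t; rewrite /damped -eE; ring.
have -> : (fun t => expR (- x * t) * sin (y * t) * (c * expR (- g * t))) =
    damped (x + g) y 0 c.
  by apply/funext => t; rewrite /damped -eE; ring.
rewrite !Rintegral_damped //; apply/eqP; rewrite eq_complex /=.
have D0 : (x + g) ^+ 2 + y ^+ 2 != 0 by rewrite gt_eqF //; nra.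
by apply/andP; split; apply/eqP; rewrite !addr0; field.
Qed.

Lemma laplace_tensor_exp (N : nat) (B : tensor N R) (g : R) (z : R[i]) :
  0 < complex.Re z + g ->
  laplace_tensor (fun t i j k l => - B i j k l * expR (- g * t)) z =
  (fun i j k l => (- (z + g%:C)^-1 * tensorC B i j k l)%C).
Proof.
move=> s0; apply/funext => i; apply/funext => j; apply/funext => k; apply/funext => l.
by rewrite /laplace_tensor laplace_exp // /tensorC raddfN; ring.
Qed.
End damped_oscillation.

Section sector.
Variable R : realType.
Local Open Scope complex_scope.
Implicit Types (g a b x y : R) (z : R[i]).

Lemma conj_resolventE a b g z :
  let D := (complex.Re z + g) ^+ 2 + complex.Im z ^+ 2 in 0 < D ->
  z^* * (a%:C - b%:C / (z + g%:C)) =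
    (complex.Re z * (a - (complex.Re z + g) / D * b) + complex.Im z ^+ 2 / D * b) +i*
    (- (complex.Im z * (a - (2 * complex.Re z + g) / D * b))).
Proof.
case: z => x y D D0; apply/eqP; rewrite eq_complex /=.
by apply/andP; split; apply/eqP; rewrite !addr0 -/D; field; rewrite gt_eqF.
Qed.

Definition sector_weight g : R := Num.min g 1 / (2 * (1 + g ^+ 2)).

Lemma sector_weight_gt0 g : 0 < g -> 0 < sector_weight g.
Proof.
move=> g0; rewrite divr_gt0 ?lt_min ?g0 ?ltr01 //.
by rewrite mulr_gt0 // ltr_pwDl ?sqr_ge0.
Qed.

Lemma sector_weight_le1 g : 0 < g -> sector_weight g <= 1.
Proof.
move=> g0; have m1 : Num.min g 1 <= 1 by rewrite ge_min lexx orbT.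
rewrite ler_pdivrMr ?mul1r; last by rewrite mulr_gt0 // ltr_pwDl ?sqr_ge0.
apply: (le_trans m1); have := sqr_ge0 g; lra.
Qed.

Lemma sector_weightP x y g : 0 <= x -> 0 < g ->
  sector_weight g * (x + (x ^+ 2 + y ^+ 2) / (1 + (x ^+ 2 + y ^+ 2))) <=
    x + y ^+ 2 / ((x + g) ^+ 2 + y ^+ 2).
Proof.
move=> x0 g0; set r := x ^+ 2 + y ^+ 2; set m := Num.min g 1; set D := (x + g) ^+ 2 + y ^+ 2.
have mg : m <= g by rewrite ge_min lexx.
have m1 : m <= 1 by rewrite ge_min lexx orbT.
have m0 : 0 < m by rewrite lt_min g0 ltr01.
have D0 : 0 < D by rewrite /D; nra.
have r0 : 0 <= r by rewrite /r; nra.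
have w2 : sector_weight g <= 1 / 2.
  rewrite /sector_weight -/m ler_pdivrMr; last by rewrite mulr_gt0 // ltr_pwDl ?sqr_ge0.
  have := sqr_ge0 g; lra.
have hq : sector_weight g * (r / (1 + r)) <= x / 2 + y ^+ 2 / D.
  have mr : m * r <= x * D / 2 + y ^+ 2 by rewrite /r /D; nra.
  have DM : D <= 2 * (1 + g ^+ 2) * (1 + r) by rewrite /D /r; nra.
  have -> : x / 2 + y ^+ 2 / D = (x * D / 2 + y ^+ 2) / D by field; rewrite gt_eqF.
  apply: (@le_trans _ _ (m * r / D)); last by rewrite ler_wpM2r // invr_ge0 (ltW D0).
  rewrite /sector_weight -/m mulf_div ler_wpM2l ?mulr_ge0 ?(ltW m0) //.
  by rewrite lef_pV2 ?posrE //; nra.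
have := ler_wpM2r x0 w2; lra.
Qed.

Lemma resolvent_ratio_le x y g : 0 <= x -> 0 < g ->
  (2 * x + g) / ((x + g) ^+ 2 + y ^+ 2) <= g^-1.
Proof.
move=> x0 g0; rewrite ler_pdivrMr; last by nra.
by rewrite [g^-1 * _]mulrC ler_pdivlMr //; nra.
Qed.

Lemma sector_bounds g a b n k1 k2 z :
  0 < complex.Re z -> 0 < g -> 0 < k1 -> 0 < k2 -> 0 <= n ->
  k1 * n <= g * a - b -> k2 * n <= b ->
  let c := Num.min (k1 / g) k2 * sector_weight g in
  let Q := z^* * (a%:C - b%:C / (z + g%:C)) in
  let nz2 := complex.Re z ^+ 2 + complex.Im z ^+ 2 in
  c * (complex.Re z + nz2 / (1 + nz2)) * n <= complex.Re Q /\
  complex.Im Q * complex.Im z <= - c * complex.Im z ^+ 2 * n.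
Proof.
move=> x0 g0 k10 k20 n0 hk1 hk2 c Q nz2.
have D0 : 0 < (complex.Re z + g) ^+ 2 + complex.Im z ^+ 2 by nra.
rewrite /Q conj_resolventE //= /c /nz2.
move: x0 D0; set x := complex.Re z; set y := complex.Im z => x0 D0.
set D := (x + g) ^+ 2 + y ^+ 2 in D0 *; set K := k1 / g; set w := sector_weight g.
have w0 : 0 < w by exact: sector_weight_gt0.
have w1 : w <= 1 by exact: sector_weight_le1.
have kK : Num.min K k2 <= K by rewrite ge_min lexx.
have kk2 : Num.min K k2 <= k2 by rewrite ge_min lexx orbT.
have kk0 : 0 < Num.min K k2 by rewrite lt_min divr_gt0 ?k20.
have b0 : 0 <= b by nra.
have Kn : K * n <= a - (2 * x + g) / D * b.
  have : (2 * x + g) / D * b <= b / g.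
    by rewrite mulrC ler_wpM2l // resolvent_ratio_le // (ltW x0).
  suff : K * n <= a - b / g by lra.
  have -> : a - b / g = (g * a - b) / g by field; rewrite gt_eqF.
  by rewrite /K mulrAC ler_wpM2r // invr_ge0 (ltW g0).
split.
- have rD : (x + g) / D * b <= (2 * x + g) / D * b.
    by rewrite ler_wpM2r // ler_wpM2r ?invr_ge0 ?(ltW D0) //; lra.
  have yD : 0 <= y ^+ 2 / D by rewrite divr_ge0 ?sqr_ge0 ?(ltW D0).
  have := @sector_weightP x y g (ltW x0) g0; rewrite -/D -/w => hw.
  have e1 : Num.min K k2 * n * (w * (x + nz2 / (1 + nz2))) <=
            Num.min K k2 * n * (x + y ^+ 2 / D).
    by rewrite ler_wpM2l // mulr_ge0 // (ltW kk0).
  have e2 : x * (Num.min K k2 * n) <= x * (a - (x + g) / D * b).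
    by rewrite ler_pM2l //; have := ler_wpM2r n0 kK; lra.
  have e3 : y ^+ 2 / D * (Num.min K k2 * n) <= y ^+ 2 / D * b.
    by rewrite ler_wpM2l //; nra.
  rewrite /nz2 in e1; nra.
- have e : y ^+ 2 * (Num.min K k2 * w * n) <= y ^+ 2 * (a - (2 * x + g) / D * b).
    rewrite ler_wpM2l ?sqr_ge0 //; apply: le_trans Kn.
    by rewrite ler_wpM2r //; nra.
  nra.
Qed.
End sector.

Theorem proposition4p5 (R : realType) (N : nat) (Ah B : tensor N R) (gamma : R) :
  sym_tensor Ah -> sym_tensor B -> pos_tensor Ah -> pos_tensor B ->
  0 < gamma ->
  pos_tensor (fun i j k l => gamma * Ah i j k l - B i j k l) ->
  let S : R -> tensor N R := fun t i j k l => - B i j k l * expR (- gamma * t) in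
  exists c : R, 0 < c /\
    forall (z : R[i]) (xi : 'M[R[i]]_N),
      0 < complex.Re z -> symmx xi ->
      let Q := ddot (tapply (fun i j k l => tensorC Ah i j k l + laplace_tensor S z i j k l) xi)
                    (mxconjC (z *: xi)) in
      let nz2 := complex.Re z ^+ 2 + complex.Im z ^+ 2 in
      c * (complex.Re z + nz2 / (1 + nz2)) * fnorm2 xi <= complex.Re Q /\
      complex.Im Q * complex.Im z <= - c * (complex.Im z) ^+ 2 * fnorm2 xi.
Proof.
move=> sAh sB _ pB g0 pG S.
have [k1 k10 hk1] := pos_tensor_coerciveC pG.
have [k2 k20 hk2] := pos_tensor_coerciveC pB.
exists (Num.min (k1 / gamma) k2 * sector_weight gamma); split.
  by rewrite mulr_gt0 ?sector_weight_gt0 // lt_min divr_gt0.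
move=> z xi x0 sxi Q nz2.
have -> : Q = (z^* * ((hform Ah xi)%:C - (hform B xi)%:C / (z + gamma%:C)))%C.
  by rewrite /Q /S laplace_tensor_exp ?addr_gt0 // ddot_tensorC_comb //; ring.
apply: sector_bounds => //; first exact: fnorm2_ge0.
- by rewrite -hform_tensorZB hk1.
- exact: hk2.
Qed.
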